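(* For every integer $k\ge1$ there is a constant $C>0$ such that for every $r\ge1$ and every non-negative $C^2$ function $u$ on the disk $D_r=\{z\in\mathbb C:|z|<r\}$ satisfying $\Delta u=2(e^u-e^{(1-k)u})$, one has $u(0)\le C/r^2$.
   Context: $\Delta=\partial_x^2+\partial_y^2$ is the Euclidean Laplacian. *)

From Stdlib Require Import Reals.
From Coquelicot Require Import Coquelicot.
Open Scope R_scope.

(* A function on the plane R^2 = C, written u x y for u(x + i y). *)

Definition in_disk (r x y : R) : Prop := x ^ 2 + y ^ 2 < r ^ 2.

Definition dx (u : R -> R -> R) : R -> R -> R := fun x y => Derive (fun t => u t y) x.
Definition dy (u : R -> R -> R) : R -> R -> R := fun x y => Derive (fun t => u x t) y.

Definition cont2 (f : R -> R -> R) (x y : R) : Prop :=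
  continuous (fun p : R * R => f (fst p) (snd p)) (x, y).

Definition C2_at (u : R -> R -> R) (x y : R) : Prop :=
  ex_derive (fun t => u t y) x /\ ex_derive (fun t => u x t) y /\
  ex_derive (fun t => dx u t y) x /\ ex_derive (fun t => dx u x t) y /\
  ex_derive (fun t => dy u t y) x /\ ex_derive (fun t => dy u x t) y /\
  cont2 u x y /\ cont2 (dx u) x y /\ cont2 (dy u) x y /\
  cont2 (dx (dx u)) x y /\ cont2 (dy (dx u)) x y /\
  cont2 (dx (dy u)) x y /\ cont2 (dy (dy u)) x y.

Definition C2_on_disk (r : R) (u : R -> R -> R) : Prop :=
  forall x y, in_disk r x y -> C2_at u x y.

Definition laplacian (u : R -> R -> R) : R -> R -> R :=
  fun x y => dx (dx u) x y + dy (dy u) x y.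

(* A barrier argument of Keller-Osserman type.  With s = r/2 the square (-s,s)^2 lies in D_r;
   on it put W(x,y) = G(x) + G(y) with G(x) = 48 s^2 / (s^2 - x^2)^2, which blows up on the
   boundary and satisfies G'' <= G^2/2, hence Delta W <= W^2/2.  For u >= 0 and k >= 1,
   2 (e^u - e^((1-k)u)) >= 2 (u + u^2/4) >= u^2/2, so Delta u >= u^2/2.  If u(0) > W(0) = 96/s^2,
   then u - W has a positive interior maximum at some p, where u(p) > W(p) >= 0 and
   Delta u(p) <= Delta W(p) <= W(p)^2/2 < u(p)^2/2 <= Delta u(p).  So u(0) <= 96/s^2 = 384/r^2. *)

From Stdlib Require Import Reals Lra Psatz Classical ClassicalEpsilon RList.
From Coquelicot Require Import Coquelicot.
Open Scope R_scope.

Lemma local_max_second_derivative_nonpos (f f' : R -> R) (lo hi x0 f''0 : R) :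
  lo < x0 < hi ->
  (forall x, lo < x < hi -> is_derive f x (f' x)) ->
  is_derive f' x0 f''0 ->
  (forall x, lo < x < hi -> f x <= f x0) ->
  f''0 <= 0.
Proof.
  intros Hx0 Hf Hf' Hmax.
  apply Rnot_lt_le. intros Hpos.
  assert (Hcrit : f' x0 = 0).
  { assert (Hlim : derivable_pt_lim f x0 (f' x0)) by (apply is_derive_Reals, Hf, Hx0).
    change (f' x0) with (derive_pt f x0 (exist _ _ Hlim)).
    apply (deriv_maximum f lo hi); try lra. intros x Hlo Hhi. apply Hmax. lra. }
  apply is_derive_Reals in Hf'.
  destruct (Hf' f''0 Hpos) as [e He].
  set (h := Rmin e (hi - x0) / 2).
  assert (Hh : 0 < h < e /\ x0 + h < hi).
  { unfold h. generalize (Rmin_l e (hi - x0)) (Rmin_r e (hi - x0)).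
    apply Rmin_case; destruct e; simpl; lra. }
  destruct (MVT_cor2 f f' x0 (x0 + h)) as [c [Hmvt Hc]]; [lra| |].
  { intros c Hc. apply is_derive_Reals, Hf. lra. }
  (* f' vanishes at x0 and has positive derivative there, so it is positive just to the right *)
  assert (Hf'c : 0 < f' c).
  { specialize (He (c - x0) ltac:(lra) ltac:(rewrite Rabs_right; lra)).
    replace (x0 + (c - x0)) with c in He by ring. rewrite Hcrit in He.
    apply Rabs_def2 in He.
    assert (0 < (f' c - 0) / (c - x0)) by lra.
    replace (f' c) with ((f' c - 0) / (c - x0) * (c - x0)) by (field; lra).
    apply Rmult_lt_0_compat; lra. }
  assert (f (x0 + h) <= f x0) by (apply Hmax; lra).
  nra.
Qed.

Definition in_rect (a b c d x y : R) : Prop := a <= x <= b /\ c <= y <= d.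

Lemma cont2_bounded_on_rect (F : R -> R -> R) (a b c d : R) :
  (forall x y, in_rect a b c d x y -> cont2 F x y) ->
  exists B, forall x y, in_rect a b c d x y -> F x y <= B.
Proof.
  intros HF.
  set (F' := fun t : Compactness.Tn 2 R => F (fst t) (fst (snd t))).
  set (inside := Compactness.bounded_n 2 (a, (c, tt)) (b, (d, tt))).
  assert (Hmod : forall t, exists del : posreal,
    inside t -> forall x, Compactness.close_n 2 del x t -> F' x < F' t + 1).
  { intros [t1 [t2 []]].
    destruct (classic (in_rect a b c d t1 t2)) as [Hr | Hr].
    - destruct (HF t1 t2 Hr _ (locally_ball (F t1 t2) (mkposreal 1 Rlt_0_1))) as [del Hdel].
      exists del. intros _ [x1 [x2 []]] [H1 [H2 _]].
      specialize (Hdel (x1, x2) (conj H1 H2)). apply Rabs_def2 in Hdel.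
      unfold F', minus, plus, opp in *. simpl in *. lra.
    - exists (mkposreal 1 Rlt_0_1). intros Hin. exfalso. apply Hr.
      unfold inside in Hin. simpl in Hin. unfold in_rect. tauto. }
  destruct (choice _ Hmod) as [del Hdel].
  apply NNPP. intros Hunb.
  apply (Compactness.compactness_list 2 (a, (c, tt)) (b, (d, tt)) del). intros [l Hl].
  apply Hunb. exists (MaxRlist (List.map F' l) + 1). intros x y Hxy.
  destruct (Hl (x, (y, tt))) as [t [Htl [Ht Hclose]]].
  { simpl. unfold in_rect in Hxy. tauto. }
  assert (F' t <= MaxRlist (List.map F' l)) by (apply MaxRlist_P1, List.in_map, Htl).
  specialize (Hdel t Ht _ Hclose). unfold F' in *. simpl in Hdel. lra.
Qed.

(* The supremum M is attained: otherwise 1 / (M - F) would be continuous, hence bounded,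
   on the rectangle. *)
Lemma cont2_attains_max_on_rect (F : R -> R -> R) (a b c d : R) :
  a <= b -> c <= d ->
  (forall x y, in_rect a b c d x y -> cont2 F x y) ->
  exists x0 y0, in_rect a b c d x0 y0 /\
    forall x y, in_rect a b c d x y -> F x y <= F x0 y0.
Proof.
  intros Hab Hcd HF.
  assert (Hac : in_rect a b c d a c) by (unfold in_rect; lra).
  destruct (cont2_bounded_on_rect F a b c d HF) as [B HB].
  set (E := fun v => exists x y, in_rect a b c d x y /\ v = F x y).
  destruct (completeness E) as [M [HM HMleast]].
  { exists B. intros v [x [y [Hxy ->]]]. auto. }
  { exists (F a c). exists a, c. auto. }
  apply NNPP. intros Hnot.
  assert (Hlt : forall x y, in_rect a b c d x y -> F x y < M).
  { intros x y Hxy. destruct (HM (F x y)) as [H | H]; [exists x, y; auto | exact H |].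
    exfalso. apply Hnot. exists x, y. split; [exact Hxy|].
    intros x' y' Hxy'. rewrite H. apply HM. exists x', y'. auto. }
  destruct (cont2_bounded_on_rect (fun x y => / (M - F x y)) a b c d) as [B' HB'].
  { intros x y Hxy. unfold cont2.
    apply (continuous_comp (fun p : R * R => M - F (fst p) (snd p)) Rinv).
    - apply (continuous_minus (fun _ : R * R => M)); [apply continuous_const | apply HF, Hxy].
    - apply continuous_Rinv. specialize (Hlt x y Hxy). simpl. lra. }
  assert (HB'pos : 0 < B').
  { eapply Rlt_le_trans; [| apply (HB' a c Hac)].
    apply Rinv_0_lt_compat. specialize (Hlt a c Hac). lra. }
  assert (M <= M - / B').
  { apply HMleast. intros v [x [y [Hxy ->]]].
    specialize (Hlt x y Hxy). specialize (HB' x y Hxy). simpl in HB'.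
    apply Rinv_le_contravar in HB'; [| apply Rinv_0_lt_compat; lra].
    rewrite Rinv_inv in HB'. lra. }
  assert (0 < / B') by (apply Rinv_0_lt_compat; exact HB'pos).
  lra.
Qed.

Lemma cont2_minus (F G : R -> R -> R) x y :
  cont2 F x y -> cont2 G x y -> cont2 (fun x y => F x y - G x y) x y.
Proof. intros HF HG. exact (continuous_minus _ _ _ HF HG). Qed.

Lemma cont2_fst (f : R -> R) x y : continuous f x -> cont2 (fun x _ => f x) x y.
Proof. intros Hf. exact (continuous_comp fst f (x, y) (continuous_fst x y) Hf). Qed.

Lemma cont2_snd (f : R -> R) x y : continuous f y -> cont2 (fun _ y => f y) x y.
Proof. intros Hf. exact (continuous_comp snd f (x, y) (continuous_snd x y) Hf). Qed.

Definition barrier (s x : R) : R := 48 * s ^ 2 / (s ^ 2 - x ^ 2) ^ 2.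
Definition barrier' (s x : R) : R := 192 * s ^ 2 * x / (s ^ 2 - x ^ 2) ^ 3.
Definition barrier'' (s x : R) : R :=
  192 * s ^ 2 * (s ^ 2 + 5 * x ^ 2) / (s ^ 2 - x ^ 2) ^ 4.

Lemma is_derive_barrier s x : x ^ 2 < s ^ 2 -> is_derive (barrier s) x (barrier' s x).
Proof.
  intros Hx. unfold barrier, barrier'. auto_derive.
  - assert (s * (s * 1) + - (x * (x * 1)) <> 0) by nra.
    repeat apply Rmult_integral_contrapositive_currified; auto with real.
  - field. nra.
Qed.

Lemma is_derive_barrier' s x : x ^ 2 < s ^ 2 -> is_derive (barrier' s) x (barrier'' s x).
Proof.
  intros Hx. unfold barrier', barrier''. auto_derive.
  - assert (s * (s * 1) + - (x * (x * 1)) <> 0) by nra.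
    repeat apply Rmult_integral_contrapositive_currified; auto with real.
  - field. nra.
Qed.

Lemma barrier_ge0 s x : x ^ 2 < s ^ 2 -> 0 <= barrier s x.
Proof.
  intros Hx. unfold barrier. apply Rmult_le_pos; [nra|].
  apply Rlt_le, Rinv_0_lt_compat, pow_lt. lra.
Qed.

(* 48 is the least c for which c s^2 / (s^2 - x^2)^2 satisfies this inequality on (-s, s). *)
Lemma barrier''_le_half_sqr s x : x ^ 2 < s ^ 2 -> barrier'' s x <= barrier s x ^ 2 / 2.
Proof.
  intros Hx.
  assert (E : barrier s x ^ 2 / 2 - barrier'' s x
              = 960 * s ^ 2 * (s ^ 2 - x ^ 2) / (s ^ 2 - x ^ 2) ^ 4).
  { unfold barrier, barrier''. field. lra. }
  assert (0 <= 960 * s ^ 2 * (s ^ 2 - x ^ 2) / (s ^ 2 - x ^ 2) ^ 4).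
  { apply Rmult_le_pos; [nra|]. apply Rlt_le, Rinv_0_lt_compat, pow_lt. lra. }
  lra.
Qed.

Lemma barrier_blowup s K : 0 < s ->
  exists t, 0 < t < s /\ forall x, t ^ 2 < x ^ 2 < s ^ 2 -> K <= barrier s x.
Proof.
  intros Hs.
  set (K' := Rmax K 1).
  assert (HK' : K <= K' /\ 1 <= K') by (split; [apply Rmax_l | apply Rmax_r]).
  set (d := Rmin (s ^ 2 / 2) (Rmin 1 (48 * s ^ 2 / K'))).
  assert (Hd : 0 < d /\ d <= s ^ 2 / 2 /\ d <= 1 /\ d <= 48 * s ^ 2 / K').
  { assert (0 < 48 * s ^ 2 / K') by (apply Rdiv_lt_0_compat; nra).
    unfold d. repeat split;
      repeat (apply Rmin_glb_lt || apply Rmin_glb); try lra;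
      repeat (apply Rmin_l || apply Rmin_r || (eapply Rle_trans; [apply Rmin_r|])); nra. }
  exists (sqrt (s ^ 2 - d)).
  assert (Ht2 : sqrt (s ^ 2 - d) ^ 2 = s ^ 2 - d) by (apply pow2_sqrt; nra).
  assert (Ht0 : 0 < sqrt (s ^ 2 - d)) by (apply sqrt_lt_R0; nra).
  split; [nra|].
  intros x Hx. rewrite Ht2 in Hx.
  set (q := s ^ 2 - x ^ 2).
  assert (Hq : 0 < q < d) by (unfold q; lra).
  assert (HKq : K' * q ^ 2 <= 48 * s ^ 2).
  { replace (48 * s ^ 2) with (K' * (48 * s ^ 2 / K')) by (field; lra).
    apply Rmult_le_compat_l; nra. }
  assert (E : barrier s x - K' = (48 * s ^ 2 - K' * q ^ 2) / q ^ 2)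
    by (unfold barrier; fold q; field; lra).
  assert (0 <= (48 * s ^ 2 - K' * q ^ 2) / q ^ 2).
  { apply Rmult_le_pos; [lra|]. apply Rlt_le, Rinv_0_lt_compat. nra. }
  lra.
Qed.

Lemma C2_at_cont2 u x y : C2_at u x y -> cont2 u x y.
Proof. intros (_ & _ & _ & _ & _ & _ & Hu & _). exact Hu. Qed.

Section SquareEstimate.

Variables (s : R) (u : R -> R -> R).
Hypothesis s_pos : 0 < s.
Hypothesis u_C2 : forall x y, in_rect (-s) s (-s) s x y -> C2_at u x y.
Hypothesis u_subsolution : forall x y, -s < x < s -> -s < y < s ->
  0 < u x y -> u x y ^ 2 / 2 <= laplacian u x y.

Let h x y := u x y - barrier s x - barrier s y.

Lemma cont2_u_minus_barriers x y : -s < x < s -> -s < y < s -> cont2 h x y.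
Proof.
  intros Hx Hy. unfold h. apply cont2_minus; [apply cont2_minus |].
  - apply C2_at_cont2, u_C2. unfold in_rect. lra.
  - apply cont2_fst, (@ex_derive_continuous R_AbsRing R_NormedModule).
    eexists. apply is_derive_barrier. nra.
  - apply cont2_snd, (@ex_derive_continuous R_AbsRing R_NormedModule).
    eexists. apply is_derive_barrier. nra.
Qed.

Lemma u_minus_barriers_attains_max :
  exists a b, -s < a < s /\ -s < b < s /\
    forall x y, -s < x < s -> -s < y < s -> h x y <= h a b.
Proof.
  destruct (cont2_bounded_on_rect u (-s) s (-s) s) as [B HB].
  { intros x y Hxy. apply C2_at_cont2, u_C2, Hxy. }
  (* Off the inner square [-t,t]^2 a single barrier term pushes h below h 0 0, so the maximum
     of h over [-t,t]^2 is a maximum over the whole open square. *)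
  destruct (barrier_blowup s (B - h 0 0) s_pos) as [t [Ht Hfar]].
  destruct (cont2_attains_max_on_rect h (-t) t (-t) t) as [a [b [[Ha Hb] Hmax]]];
    [lra | lra | |].
  { intros x y [Hx Hy]. apply cont2_u_minus_barriers; lra. }
  exists a, b. split; [lra |]. split; [lra |].
  intros x y Hx Hy.
  destruct (classic (in_rect (-t) t (-t) t x y)) as [Hin | Hout]; [apply Hmax, Hin |].
  assert (h 0 0 <= h a b) by (apply Hmax; unfold in_rect; lra).
  assert (u x y <= B) by (apply HB; unfold in_rect; lra).
  assert (0 <= barrier s x) by (apply barrier_ge0; nra).
  assert (0 <= barrier s y) by (apply barrier_ge0; nra).
  assert (B - h 0 0 <= barrier s x \/ B - h 0 0 <= barrier s y).
  { destruct (Rlt_or_le (t ^ 2) (x ^ 2)) as [Hxt | Hxt]; [left; apply Hfar; nra | right].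
    assert (-t <= x <= t) by nra.
    assert (~ (-t <= y <= t)) by (intros Hyt; apply Hout; split; assumption).
    apply Hfar. nra. }
  unfold h in *. lra.
Qed.

Lemma laplacian_le_barrier''_at_max a b : -s < a < s -> -s < b < s ->
  (forall x y, -s < x < s -> -s < y < s -> h x y <= h a b) ->
  laplacian u a b <= barrier'' s a + barrier'' s b.
Proof.
  intros Ha Hb Hmax.
  assert (Hsq : forall x y, -s < x < s -> -s < y < s -> in_rect (-s) s (-s) s x y)
    by (intros; unfold in_rect; lra).
  assert (Hxx : dx (dx u) a b - barrier'' s a <= 0).
  { apply (local_max_second_derivative_nonpos (fun x => u x b - barrier s x)
             (fun x => dx u x b - barrier' s x) (-s) s a); [exact Ha | | |].
    - intros x Hx. destruct (u_C2 x b (Hsq x b Hx Hb)) as (Hux & _).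
      exact (is_derive_minus _ _ _ _ _ (Derive_correct _ _ Hux)
               (is_derive_barrier s x ltac:(nra))).
    - destruct (u_C2 a b (Hsq a b Ha Hb)) as (_ & _ & Huxx & _).
      exact (is_derive_minus _ _ _ _ _ (Derive_correct _ _ Huxx)
               (is_derive_barrier' s a ltac:(nra))).
    - intros x Hx. specialize (Hmax x b Hx Hb). unfold h in Hmax. lra. }
  assert (Hyy : dy (dy u) a b - barrier'' s b <= 0).
  { apply (local_max_second_derivative_nonpos (fun y => u a y - barrier s y)
             (fun y => dy u a y - barrier' s y) (-s) s b); [exact Hb | | |].
    - intros y Hy. destruct (u_C2 a y (Hsq a y Ha Hy)) as (_ & Huy & _).
      exact (is_derive_minus _ _ _ _ _ (Derive_correct _ _ Huy)
               (is_derive_barrier s y ltac:(nra))).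
    - destruct (u_C2 a b (Hsq a b Ha Hb)) as (_ & _ & _ & _ & _ & Huyy & _).
      exact (is_derive_minus _ _ _ _ _ (Derive_correct _ _ Huyy)
               (is_derive_barrier' s b ltac:(nra))).
    - intros y Hy. specialize (Hmax a y Ha Hy). unfold h in Hmax. lra. }
  unfold laplacian. lra.
Qed.

Lemma square_estimate : u 0 0 <= 96 / s ^ 2.
Proof.
  destruct u_minus_barriers_attains_max as [a [b [Ha [Hb Hmax]]]].
  apply Rnot_lt_le. intros Hbig.
  assert (Hbarrier0 : barrier s 0 = 48 / s ^ 2) by (unfold barrier; field; lra).
  assert (H0ab : h 0 0 <= h a b) by (apply Hmax; lra).
  assert (Hga : 0 <= barrier s a) by (apply barrier_ge0; nra).
  assert (Hgb : 0 <= barrier s b) by (apply barrier_ge0; nra).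
  assert (Hua : barrier s a + barrier s b < u a b) by (unfold h in H0ab; lra).
  assert (Hsub := u_subsolution a b Ha Hb ltac:(lra)).
  assert (Hlap := laplacian_le_barrier''_at_max a b Ha Hb Hmax).
  assert (Hga'' := barrier''_le_half_sqr s a ltac:(nra)).
  assert (Hgb'' := barrier''_le_half_sqr s b ltac:(nra)).
  assert ((barrier s a + barrier s b) ^ 2 < u a b ^ 2) by nra.
  nra.
Qed.

End SquareEstimate.

Lemma half_sqr_le_exp_sub_exp (k : nat) (U : R) : (1 <= k)%nat -> 0 <= U ->
  U ^ 2 / 2 <= 2 * (exp U - exp ((1 - INR k) * U)).
Proof.
  intros Hk HU.
  assert (Hdecay : exp ((1 - INR k) * U) <= 1).
  { assert (1 <= INR k) by (apply (le_INR 1), Hk).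
    assert (Hnpos : (1 - INR k) * U <= 0) by nra.
    destruct Hnpos as [Hneg | ->]; [| rewrite exp_0; lra].
    generalize (exp_increasing _ _ Hneg). rewrite exp_0. lra. }
  assert (Hgrowth : (1 + U / 2) ^ 2 <= exp U).
  { assert (Hhalf := exp_ineq1_le (U / 2)).
    replace (exp U) with (exp (U / 2) * exp (U / 2)) by (rewrite <- exp_plus; f_equal; field).
    nra. }
  nra.
Qed.

Theorem proposition2p12 :
  forall k : nat, (1 <= k)%nat ->
  exists C : R, 0 < C /\
    forall (r : R) (u : R -> R -> R),
      1 <= r ->
      C2_on_disk r u ->
      (forall x y, in_disk r x y -> 0 <= u x y) ->
      (forall x y, in_disk r x y ->
         laplacian u x y = 2 * (exp (u x y) - exp ((1 - INR k) * u x y))) ->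
      u 0 0 <= C / r ^ 2.
Proof.
  intros k Hk. exists 384. split; [lra |].
  intros r u Hr Hu Hpos Hlap.
  set (s := r / 2).
  assert (Hs : 0 < s) by (unfold s; lra).
  assert (Hsquare : forall x y, in_rect (-s) s (-s) s x y -> in_disk r x y).
  { intros x y [Hx Hy]. unfold in_disk. replace r with (2 * s) by (unfold s; lra). nra. }
  replace (384 / r ^ 2) with (96 / s ^ 2) by (unfold s; field; lra).
  apply square_estimate; [exact Hs | |].
  - intros x y Hxy. apply Hu, Hsquare, Hxy.
  - intros x y Hx Hy Hux.
    assert (Hxy : in_disk r x y) by (apply Hsquare; unfold in_rect; lra).
    rewrite (Hlap x y Hxy). apply half_sqr_le_exp_sub_exp; [exact Hk | apply Hpos, Hxy].
Qed.
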